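(* Let $G$ be a finite group of even order and let $\mathcal{F}$ be a $1$-rotational $k$-factorization of $K_{\overline{G}}$. Then for every $F\in\mathcal{F}$, the $G$-stabilizer of $F$ contains at least one element of every conjugacy class of $G$ that contains involutions.
   Context: For a finite group $G$, $\overline{G}=G\cup\{\infty\}$, and $K_V$ denotes the complete graph on vertex set $V$. $G$ acts on $\overline{G}$ by right multiplication, with $\infty g=\infty$ for all $g\in G$; for a subgraph $F$ of $K_{\overline{G}}$ and $g\in G$, $Fg$ is the graph obtained by replacing every vertex $v$ by $vg$. A $k$-factor of $K_V$ is a spanning $k$-regular subgraph, and a $k$-factorization is a set of $k$-factors whose edge sets partition the edge set of $K_V$. A $k$-factorization $\mathcal{F}$ of $K_{\overline{G}}$ is $1$-rotational if $Fg\in\mathcal{F}$ for all $F\in\mathcal{F}$ and $g\in G$. The $G$-stabilizer of a factor $F$ is $\{g\in G: Fg=F\}$. An involution is an element of order $2$. *)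

From mathcomp Require Import all_boot all_fingroup.
Set Implicit Arguments. Unset Strict Implicit. Unset Printing Implicit Defensive.
Local Open Scope group_scope.

Section OneRot.
Variable gT : finGroupType.

(* Vertex set  G ∪ {∞}:  Some x = x ∈ G,  None = ∞ *)
Definition vtx := option gT.
Definition edge := {set vtx}.
Definition graph := {set edge}.

Definition is_edge (e : edge) : bool := #|e| == 2.
Definition Kedges : graph := [set e : edge | is_edge e].

Definition vact (v : vtx) (g : gT) : vtx := omap (fun x => x * g) v.
Definition eact (e : edge) (g : gT) : edge := [set vact v g | v in e].
Definition gact (F : graph) (g : gT) : graph := [set eact e g | e in F].

Definition deg (F : graph) (v : vtx) : nat := #|[set e in F | v \in e]|.

Definition is_kfactor (k : nat) (F : graph) : bool :=
  (F \subset Kedges) && [forall v : vtx, deg F v == k].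

Definition is_kfactorization (k : nat) (FF : {set graph}) : Prop :=
  (forall F, F \in FF -> is_kfactor k F) /\
  (forall e, e \in Kedges -> exists! F, F \in FF /\ e \in F).

Definition one_rotational (FF : {set graph}) : Prop :=
  forall F g, F \in FF -> gact F g \in FF.

Definition stabilizer (F : graph) : {set gT} := [set g | gact F g == F].

Definition involution (x : gT) : bool := #[x] == 2.
End OneRot.

From Pilot Require Import Defs.
From mathcomp Require Import all_boot all_fingroup.
Set Implicit Arguments.
Unset Strict Implicit.
Unset Printing Implicit Defensive.
Local Open Scope group_scope.

(* Since every factor has an edge through the fixed point ∞, the translates of
   any one factor reach every factor of a 1-rotational factorization: the
   G-orbit is all of the factorization, so all stabilizers are conjugate.  An
   involution x maps the edge {1, x} to {x, 1}, hence stabilizes the factor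
   containing that edge; a conjugate of x then stabilizes any given factor.
   (The evenness of |G| is only needed for involutions to exist.) *)

Section GraphAction.
Variable gT : finGroupType.

Lemma vactM (v : vtx gT) g h : vact (vact v g) h = vact v (g * h).
Proof. by case: v => [a|] //=; rewrite mulgA. Qed.

Lemma vact1 (v : vtx gT) : vact v 1 = v.
Proof. by case: v => [a|] //=; rewrite mulg1. Qed.

Lemma vact_inj g : injective (fun v : vtx gT => vact v g).
Proof. by move=> [a|] [b|] //= [] /mulIg ->. Qed.

Lemma eactM (e : edge gT) g h : eact (eact e g) h = eact e (g * h).
Proof. by rewrite /eact -imset_comp; apply: eq_imset => v /=; apply: vactM. Qed.

Lemma eact1 (e : edge gT) : eact e 1 = e.
Proof. by rewrite /eact -[RHS]imset_id; apply: eq_imset => v; apply: vact1. Qed.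

Lemma eact_set2 (u v : vtx gT) g : eact [set u; v] g = [set vact u g; vact v g].
Proof. by rewrite /eact imsetU1 imset_set1. Qed.

Lemma eact_Kedges (e : edge gT) g : e \in Kedges gT -> eact e g \in Kedges gT.
Proof. by rewrite !inE /is_edge /eact card_imset //; apply: vact_inj. Qed.

Lemma gactM (F : graph gT) g h : Defs.gact (Defs.gact F g) h = Defs.gact F (g * h).
Proof. by rewrite /Defs.gact -imset_comp; apply: eq_imset => e /=; apply: eactM. Qed.

Lemma gact1 (F : graph gT) : Defs.gact F 1 = F.
Proof. by rewrite /Defs.gact -[RHS]imset_id; apply: eq_imset => e; apply: eact1. Qed.

Lemma mem_gact (F : graph gT) e g : e \in F -> eact e g \in Defs.gact F g.
Proof. exact: imset_f. Qed.

Lemma stabilizerJ (F F' : graph gT) g h :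
  Defs.gact F g = F' -> h \in stabilizer F' -> h ^ g^-1 \in stabilizer F.
Proof.
move=> defF' /[!inE] /eqP hF'.
by rewrite /conjg invgK -!gactM defF' hF' -defF' gactM mulgV gact1.
Qed.

Lemma kfactor_gt0 k (F : graph gT) e : is_kfactor k F -> e \in F -> 0 < k.
Proof.
case/andP=> /subsetP sFK /forallP degF eF.
have /cards2P [u [v [_ defe]]] : #|e| == 2 by have := sFK e eF; rewrite inE.
rewrite -(eqP (degF u)) /deg card_gt0; apply/set0Pn; exists e.
by rewrite inE eF defe !inE eqxx.
Qed.

Lemma kfactor_inf_edge k (F : graph gT) : is_kfactor k F -> 0 < k ->
  exists a, [set None; Some a] \in F.
Proof.
case/andP=> /subsetP sFK /forallP /(_ None) /eqP degN k_gt0.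
have : 0 < deg F None by rewrite degN.
rewrite /deg card_gt0 => /set0Pn [e /[!inE] /andP [eF Ne]].
have /cards2P [u [v [uv defe]]] : #|e| == 2 by have := sFK e eF; rewrite inE.
move: Ne; rewrite defe !inE => /orP [/eqP Nu | /eqP Nv].
- by subst u; case: v uv defe => [a|] // _ defe; exists a; rewrite -defe.
- by subst v; case: u uv defe => [a|] // _ defe; exists a; rewrite setUC -defe.
Qed.

Section OneRotationalFactorization.
Variables (k : nat) (FF : {set graph gT}).
Hypotheses (FFfac : is_kfactorization k FF) (FFrot : one_rotational FF).

Lemma factor_of_edge_uniq F1 F2 e : F1 \in FF -> F2 \in FF -> e \in Kedges gT ->
  e \in F1 -> e \in F2 -> F1 = F2.
Proof.
move=> FF1 FF2 eK eF1 eF2; have [F0 [_ F0uniq]] := FFfac.2 e eK.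
by rewrite -(F0uniq F1 (conj FF1 eF1)) (F0uniq F2 (conj FF2 eF2)).
Qed.

Lemma stabilizer_of_fixed_edge F e g : F \in FF -> e \in Kedges gT -> e \in F ->
  eact e g = e -> g \in stabilizer F.
Proof.
move=> FF_F eK eF fixe; rewrite inE; apply/eqP.
by apply: (factor_of_edge_uniq (FFrot g FF_F) FF_F eK _ eF); rewrite -{1}fixe mem_gact.
Qed.

Lemma factors_conjugate F1 F2 : F1 \in FF -> F2 \in FF -> 0 < k ->
  exists g, Defs.gact F1 g = F2.
Proof.
move=> FF1 FF2 k_gt0.
have [a eaF1] := kfactor_inf_edge (FFfac.1 F1 FF1) k_gt0.
have [b ebF2] := kfactor_inf_edge (FFfac.1 F2 FF2) k_gt0.
have ea_to_eb : eact [set None; Some a] (a^-1 * b) = [set None; Some b].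
  by rewrite eact_set2 /= mulKVg.
exists (a^-1 * b); apply: (factor_of_edge_uniq _ _ _ _ ebF2); rewrite ?FFrot //.
- by rewrite -ea_to_eb eact_Kedges //; case/andP: (FFfac.1 F1 FF1) => /subsetP->.
- by rewrite -ea_to_eb mem_gact.
Qed.

End OneRotationalFactorization.
End GraphAction.

Theorem mainTheorem2 (gT : finGroupType) (k : nat) (FF : {set graph gT}) :
  ~~ odd #|[set: gT]| ->
  is_kfactorization k FF ->
  one_rotational FF ->
  forall F, F \in FF ->
  forall x : gT, involution x ->
  exists2 g, g \in stabilizer F & g \in x ^: [set: gT].
Proof.
move=> _ FFfac FFrot F FF_F x /eqP ox.
have xx : x * x = 1 by rewrite -[x * x]/(x ^+ 2) -ox expg_order.
have x_neq1 : x != 1 by apply: contra_eqN ox => /eqP ->; rewrite order1.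
pose e := [set Some 1; Some x] : edge gT.
have eK : e \in Kedges gT.
  by rewrite inE /is_edge cards2 (inj_eq Some_inj) eq_sym (eq_sym 1) x_neq1.
have [Fx [[FF_Fx eFx] _]] := FFfac.2 e eK.
have x_stab : x \in stabilizer Fx.
  apply: (stabilizer_of_fixed_edge FFfac FFrot FF_Fx eK eFx).
  by rewrite eact_set2 /= mul1g xx setUC.
have k_gt0 := kfactor_gt0 (FFfac.1 Fx FF_Fx) eFx.
have [g FgFx] := factors_conjugate FFfac FFrot FF_F FF_Fx k_gt0.
exists (x ^ g^-1); first exact: stabilizerJ FgFx x_stab.
exact: memJ_class (in_setT _).
Qed.
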